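(* Let $X,Y$ be normed spaces over $K$ and $F:X\to Y$ a map. If $F\in B(X,Y)$, then $F$ is topology bounded. Conversely, if $F$ is topology bounded and there is a positive constant $M$ such that $\|F(kx)\|_Y\le M|k|\,\|F(x)\|_Y$ for every scalar $k\neq 0$ and every $x\neq 0$ in $X$, then $F\in B(X,Y)$.
   Context: $K$ is $\mathbb{R}$ or $\mathbb{C}$; normed spaces are nontrivial. Maps need not be linear or continuous. $\|F\|_{B(X,Y)}=\max\left(\sup_{x\neq 0,x\in X}\frac{\|F(x)\|_Y}{\|x\|_X},\ \|F(0)\|_Y\right)\in[0,\infty]$ and $B(X,Y)$ is the set of maps $F:X\to Y$ with $\|F\|_{B(X,Y)}<\infty$. A map $F:X\to Y$ is topology bounded if it maps bounded subsets of $X$ to bounded subsets of $Y$. *)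

From HB Require Import structures.
From mathcomp Require Import all_boot all_order all_algebra.
From mathcomp Require Import all_classical all_reals all_analysis.
From mathcomp Require Import complex.
Set Implicit Arguments. Unset Strict Implicit. Unset Printing Implicit Defensive.
Import Order.TTheory GRing.Theory Num.Theory.
Import numFieldNormedType.Exports.
Local Open Scope classical_set_scope.
Local Open Scope ring_scope.

(* F \in B(X,Y): the quantity
     max (sup_{x <> 0} |F x| / |x|, |F 0|)
   is finite.  Since |F 0| is always finite and the set of ratios is a set of
   nonnegative numbers, this is literally: the ratios |F x|/|x| (x <> 0) have
   a finite upper bound C. *)
Definition inB (K : numFieldType) (X Y : normedModType K) (F : X -> Y) : Prop :=
  exists C : K, forall x : X, x != 0 -> `|F x| / `|x| <= C.

Definition topology_bounded (K : numFieldType) (X Y : normedModType K)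
  (F : X -> Y) : Prop :=
  forall A : set X, bounded_set A -> bounded_set (F @` A).

Definition theorem_over (K : numFieldType) : Prop :=
  forall (X Y : normedModType K), (exists x : X, x != 0) -> (exists y : Y, y != 0) ->
  forall F : X -> Y,
    (inB F -> topology_bounded F) /\
    (topology_bounded F ->
     (exists M : K, 0 < M /\
        forall (k : K) (x : X), k != 0 -> x != 0 ->
          `|F (k *: x)| <= M * `|k| * `|F x|) ->
     inB F).

(* A map in B(X,Y) satisfies |F x| <= C |x| + |F 0|, so it maps norm-bounded
   sets to norm-bounded sets.  Conversely, topological boundedness bounds F on
   the closed unit ball by some N, and the homogeneity hypothesis applied to
   x = |x| *: u with |u| = 1 gives |F x| <= M N |x|. *)
From HB Require Import structures.
From mathcomp Require Import all_boot all_order all_algebra.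
From mathcomp Require Import all_classical all_reals all_analysis.
From mathcomp Require Import complex.
Import Order.TTheory GRing.Theory Num.Theory.
Import numFieldNormedType.Exports.
Local Open Scope classical_set_scope.
Local Open Scope ring_scope.

Section bounded_maps.
Context {K : numFieldType} {X Y : normedModType K}.

Lemma bounded_setP (V : normedModType K) (A : set V) :
  bounded_set A <-> exists2 r, 0 <= r & forall a, A a -> `|a| <= r.
Proof.
split => /=.
- by move=> /pinfty_ex_gt0[r r_gt0 Ar]; exists r => //; apply: ltW.
- move=> [r r_ge0 Ar]; rewrite /bounded_near; near=> s => a /Ar /le_trans; apply.
  by near: s; apply: nbhs_pinfty_ge; apply: ger0_real.
Unshelve. all: by end_near. Qed.

Lemma inB_norm_le (F : X -> Y) :
  inB F -> exists2 C, 0 <= C & forall x, `|F x| <= C * `|x| + `|F 0|.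
Proof.
move=> [C FC]; exists `|C| => // x.
have [->|x_neq0] := eqVneq x 0; first by rewrite normr0 mulr0 add0r.
have x_gt0 : 0 < `|x| by rewrite normr_gt0.
have FxC := FC x x_neq0.
have C_real : C \is Num.real.
  by apply: ger0_real (le_trans _ FxC); rewrite divr_ge0.
rewrite ler_pdivrMr // in FxC; apply: le_trans FxC _.
by rewrite -[C * _]addr0 lerD // ler_pM2r // real_ler_norm.
Qed.

Lemma inB_topology_bounded (F : X -> Y) : inB F -> topology_bounded F.
Proof.
move=> /inB_norm_le[C C_ge0 FC] A /bounded_setP[r r_ge0 Ar].
apply/bounded_setP; exists (C * r + `|F 0|).
  by rewrite addr_ge0 // mulr_ge0.
move=> _ [a Aa <-]; apply: le_trans (FC a) _.
by rewrite lerD2r; apply: ler_wpM2l => //; apply: Ar.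
Qed.

Lemma topology_bounded_homogeneous_inB (F : X -> Y) (M : K) :
  0 < M ->
  (forall (k : K) (x : X), k != 0 -> x != 0 -> `|F (k *: x)| <= M * `|k| * `|F x|) ->
  topology_bounded F -> inB F.
Proof.
move=> M_gt0 FM FTB.
have /FTB/bounded_setP[N N_ge0 FN] : bounded_set [set u : X | `|u| <= 1].
  by apply/bounded_setP; exists 1.
exists (M * N) => x x_neq0.
have x_gt0 : 0 < `|x| by rewrite normr_gt0.
set u := `|x|^-1 *: x.
have u_norm : `|u| = 1 by apply: normfZV.
have u_neq0 : u != 0 by rewrite -normr_eq0 u_norm oner_eq0.
have x_eq : x = `|x| *: u by rewrite scalerA mulfV ?gt_eqF ?scale1r.
rewrite ler_pdivrMr // {1}x_eq.
apply: (le_trans (FM _ _ (lt0r_neq0 x_gt0) u_neq0)).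
rewrite normr_id -mulrA [`|x| * _]mulrC mulrA ler_pM2r // ler_pM2l //.
by apply: FN; exists u; rewrite //= u_norm.
Qed.

End bounded_maps.

Lemma theorem_over_numFieldType (K : numFieldType) : theorem_over K.
Proof.
move=> X Y _ _ F; split; first exact: inB_topology_bounded.
by move=> FTB [M [M_gt0 FM]]; exact: topology_bounded_homogeneous_inB M_gt0 FM FTB.
Qed.

Theorem theorem1 :
  (forall R : realType, theorem_over R) /\
  (forall R : realType, theorem_over (R[i])%C).
Proof. by split=> R; apply: theorem_over_numFieldType. Qed.
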